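(* Let $f$ be a 3-CNF formula with clauses $C_1,\dots,C_m$ over variables $x_1,\dots,x_n$, each clause being a disjunction of three literal occurrences. Let $H$ be the graph constructed as follows: for each clause $C_i=x\vee y\vee z$ introduce six vertices $x^{(i,1)},y^{(i,1)},z^{(i,1)},x^{(i,2)},y^{(i,2)},z^{(i,2)}$ inducing a subgraph $H_i$ which is the complete graph on these six vertices minus the three edges $x^{(i,1)}x^{(i,2)}$, $y^{(i,1)}y^{(i,2)}$, $z^{(i,1)}z^{(i,2)}$; the vertices $x^{(i,1)},y^{(i,1)},z^{(i,1)}$ are associated with the literals $x,y,z$ of $C_i$. Additionally, for any two vertices $u,v$ lying in different subgraphs $H_i\neq H_j$, both associated with literals, such that the literal associated with $u$ is the negation of the literal associated with $v$, add the edge $uv$. There are no other edges. Then $\mathrm{diss}(H)=2m$, and $f$ is satisfiable if and only if $\mathrm{diss}(H)=\alpha(H)$.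
   Context: All graphs are finite, simple and undirected. A set $I$ of vertices of a graph $G$ is a dissociation set if the induced subgraph $G[I]$ has maximum degree at most $1$; $\mathrm{diss}(G)$ is the maximum order of a dissociation set in $G$. $\alpha(G)$ is the independence number. *)

From mathcomp Require Import all_boot.
Set Implicit Arguments. Unset Strict Implicit. Unset Printing Implicit Defensive.

Section GraphParams.
Variable T : finType.
Variable e : rel T.

Definition dissociation_set (I : {set T}) : bool :=
  [forall x in I, #|[set y in I | e x y]| <= 1].

Definition independent_set (I : {set T}) : bool :=
  [forall x in I, forall y in I, ~~ e x y].

Definition diss : nat := \max_(I : {set T} | dissociation_set I) #|I|.
Definition alpha : nat := \max_(I : {set T} | independent_set I) #|I|.
End GraphParams.

(** Literals over variables x_0..x_{n-1}: (variable, polarity); true = positive. *)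
Definition lit (n : nat) := ('I_n * bool)%type.
Definition lneg n (l : lit n) : lit n := (l.1, ~~ l.2).
Definition lit_true n (a : 'I_n -> bool) (l : lit n) : bool := a l.1 == l.2.

Definition cnf3 (n m : nat) := 'I_m -> 'I_3 -> lit n.

Definition satisfiable n m (f : cnf3 n m) : Prop :=
  exists a : 'I_n -> bool, forall i : 'I_m, exists k : 'I_3, lit_true a (f i k).

(** Vertices of H: (i, k, c) is the copy c of the k-th literal occurrence of
    clause C_i; c = true is copy (i,1) (associated with the literal),
    c = false is copy (i,2). *)
Definition Hvert (m : nat) := ('I_m * 'I_3 * bool)%type.

Definition Hedge n m (f : cnf3 n m) : rel (Hvert m) := fun u v =>
  if u.1.1 == v.1.1 then
    (* inside H_i: complete graph minus the edges x^(i,1) x^(i,2) *)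
    u.1.2 != v.1.2
  else
    [&& u.2, v.2 & f u.1.1 u.1.2 == lneg (f v.1.1 v.1.2)].

From mathcomp Require Import all_boot zify.
Set Implicit Arguments. Unset Strict Implicit. Unset Printing Implicit Defensive.

(* Inside a clause gadget H_i the graph is complete multipartite with the three
   parts {x^(i,1), x^(i,2)}, ..., so a dissociation set meets H_i in at most two
   vertices; the copies (i,2) of the first two occurrences of every clause give
   one of size 2m, hence diss(H) = 2m.  An independent set of size 2m must meet each
   H_i in two non-adjacent vertices, i.e. in both copies of one occurrence, one
   of which is associated with its literal; the cross edges make these chosen
   literals pairwise non-complementary, so they can all be made true.
   Conversely, picking a true literal occurrence in each clause and taking both
   of its copies yields an independent set of size 2m. *)

Section IndependentDissociation.
Variables (T : finType) (e : rel T).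

Lemma independent_dissociation_set (I : {set T}) :
  independent_set e I -> dissociation_set e I.
Proof.
move=> /forallP indI; apply/forallP => x; apply/implyP => xI.
rewrite (_ : [set y in I | e x y] = set0) ?cards0 //; apply/setP => y.
rewrite !inE; case yI: (y \in I) => //=.
by have /implyP/(_ xI)/forallP/(_ y) := indI x; rewrite yI => /negbTE.
Qed.

Lemma alpha_le_diss : alpha e <= diss e.
Proof.
apply/bigmax_leqP => I indI; apply: leq_bigmax_cond.
exact: independent_dissociation_set.
Qed.

Lemma alpha_witness : exists2 I : {set T}, independent_set e I & #|I| = alpha e.
Proof.
have set0_indep : independent_set e set0 by apply/forallP => x; rewrite inE.
have nonempty : 0 < #|independent_set e| by apply/card_gt0P; exists set0.
have [I indI maxI] := eq_bigmax_cond (fun I : {set T} => #|I|) nonempty.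
by exists I; rewrite // /alpha maxI.
Qed.

End IndependentDissociation.

Lemma lnegK n : involutive (@lneg n).
Proof. by move=> [v b]; rewrite /lneg negbK. Qed.

Lemma lneg_neq n (l : lit n) : lneg l != l.
Proof. by case: l => v b; rewrite /lneg xpair_eqE eqxx; case: b. Qed.

Lemma lit_true_lneg n (a : 'I_n -> bool) (l : lit n) :
  lit_true a (lneg l) = ~~ lit_true a l.
Proof. by rewrite /lit_true /lneg; case: (a l.1); case: l.2. Qed.

Lemma card_pair_image (T : finType) m (h : 'I_m * bool -> T) :
  injective h -> #|[set h p | p in [set: 'I_m * bool]]| = 2 * m.
Proof.
by move=> h_inj; rewrite card_imset // cardsT card_prod card_ord card_bool mulnC.
Qed.

Lemma sum_eq_bound (I : finType) (F : I -> nat) (c : nat) :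
  (forall i, F i <= c) -> \sum_i F i = #|I| * c -> forall i, F i = c.
Proof.
move=> le_Fc sumF i; apply/eqP; rewrite eqn_leq le_Fc /= leqNgt; apply/negP => lt_Fc.
have le_rest : \sum_(j | j != i) F j <= \sum_(j | j != i) c by exact: leq_sum.
move: sumF; rewrite -sum_nat_const (bigD1 i) //= [X in _ = X](bigD1 i) //=.
by move: lt_Fc le_rest; lia.
Qed.

Lemma consistent_literals_true n (L : pred (lit n)) :
  (forall l, L l -> ~~ L (lneg l)) ->
  exists a : 'I_n -> bool, forall l, L l -> lit_true a l.
Proof.
move=> consL; exists (fun v => L (v, true)) => -[v []] Ll; rewrite /lit_true /=.
  by rewrite Ll.
by rewrite eqbF_neg; apply: consL Ll.
Qed.

Section Reduction.
Variables (n m : nat) (f : cnf3 n m).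
Notation V := (Hvert m).
Notation H := (Hedge f).

Lemma Hedge_same_clause (u v : V) : u.1.1 = v.1.1 -> H u v = (u.1.2 != v.1.2).
Proof. by rewrite /Hedge => ->; rewrite eqxx. Qed.

Lemma Hedge_literal_copies (i j : 'I_m) (k l : 'I_3) : i != j ->
  H (i, k, true) (j, l, true) = (f i k == lneg (f j l)).
Proof. by rewrite /Hedge /= => /negbTE ->. Qed.

Definition clause_block (I : {set V}) (i : 'I_m) := [set v in I | v.1.1 == i].

Lemma card_clause_blocks (I : {set V}) : #|I| = \sum_(i < m) #|clause_block I i|.
Proof.
rewrite -sum1_card (partition_big (fun v : V => v.1.1) xpredT) //=.
by apply: eq_bigr => i _; rewrite -sum1_card; apply: eq_bigl => v; rewrite inE.
Qed.

Lemma card_occurrence_copies (A : {set V}) (i : 'I_m) (k : 'I_3) :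
  {subset A <= [pred v : V | v.1 == (i, k)]} -> #|A| <= 2.
Proof.
move=> sub_A; apply: leq_trans (_ : #|[set (i, k, true); (i, k, false)]| <= 2).
  apply: subset_leq_card; apply/subsetP => -[ik c] /sub_A /eqP /= ->.
  by rewrite !inE; case: c; rewrite eqxx ?orbT.
by rewrite cards2; case: (_ != _).
Qed.

Lemma dissociation_clause_block_le2 (I : {set V}) (i : 'I_m) :
  dissociation_set H I -> #|clause_block I i| <= 2.
Proof.
move=> /forallP dissI; set B := clause_block I i.
have B_I z : z \in B -> z \in I by rewrite inE => /andP[].
have B_clause z : z \in B -> z.1.1 = i by rewrite inE => /andP[_ /eqP].
clearbody B.
pose N (x : V) := [set y in B | x.1.2 != y.1.2].
have card_N x : x \in B -> #|N x| <= 1.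
  move=> xB; have /implyP/(_ (B_I x xB)) := dissI x; apply: leq_trans.
  apply: subset_leq_card; apply/subsetP => y /setIdP[yB ne]; apply/setIdP; split; first exact: B_I.
  by rewrite Hedge_same_clause ?B_clause.
have [-> | [x xB]] := set_0Vmem B; first by rewrite cards0.
have [N0 | [y]] := set_0Vmem (N x).
  apply: (card_occurrence_copies (k := x.1.2)) => z zB; rewrite inE.
  have : z \notin N x by rewrite N0 inE.
  by rewrite inE zB negbK => /eqP xz; rewrite [z.1]surjective_pairing B_clause ?xz.
rewrite inE => /andP[yB neq_xy].
apply: leq_trans (_ : #|N y :|: N x| <= 2).
  apply: subset_leq_card; apply/subsetP => z zB; rewrite !inE zB /=.
  by case: (eqVneq y.1.2 z.1.2) => [<- |].
rewrite cardsU; apply: leq_trans (leq_subr _ _) _.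
exact: leq_add (card_N y yB) (card_N x xB).
Qed.

Lemma diss_Hedge_le : diss H <= 2 * m.
Proof.
apply/bigmax_leqP => I dissI; rewrite card_clause_blocks.
apply: leq_trans (_ : \sum_(i < m) 2 <= _); last by rewrite sum_nat_const card_ord mulnC.
by apply: leq_sum => i _; apply: dissociation_clause_block_le2.
Qed.

(* Each vertex [(i, b, false)] has exactly one neighbour in this set, namely
   [(i, ~~ b, false)]: copies (i,2) carry no cross edges. *)
Lemma diss_Hedge_ge : 2 * m <= diss H.
Proof.
pose occ (b : bool) : 'I_3 := inord b.
have occ_inj : injective occ by case=> -[] /(congr1 val); rewrite /= ?inordK.
pose h (p : 'I_m * bool) : V := (p.1, occ p.2, false).
have h_inj : injective h by move=> [i b] [j c] [-> /occ_inj ->].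
rewrite -(card_pair_image h_inj); apply: leq_bigmax_cond.
apply/forallP => x; apply/implyP => /imsetP[[i b] _ ->].
apply: leq_trans (_ : #|[set h (i, ~~ b)]| <= 1); last by rewrite cards1.
apply: subset_leq_card; apply/subsetP => y; rewrite !inE => /andP[/imsetP[[j c] _ ->]].
rewrite /Hedge /=; case: eqP => [<- | //] /eqP neq_bc.
by case: b c neq_bc => -[].
Qed.

Lemma diss_Hedge : diss H = 2 * m.
Proof. by apply/eqP; rewrite eqn_leq diss_Hedge_le diss_Hedge_ge. Qed.

Lemma satisfiable_alpha_Hedge : satisfiable f -> 2 * m <= alpha H.
Proof.
move=> [a /fin_all_exists[k true_k]].
pose h (p : 'I_m * bool) : V := (p.1, k p.1, p.2).
have h_inj : injective h by move=> [i b] [j c] [-> _ ->].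
rewrite -(card_pair_image h_inj); apply: leq_bigmax_cond.
apply/forallP => x; apply/implyP => /imsetP[[i b] _ ->].
apply/forallP => y; apply/implyP => /imsetP[[j c] _ ->].
rewrite /Hedge /=; case: eqP => [<- | _]; first by rewrite eqxx.
apply/negP => /and3P[_ _ /eqP compl].
by have := true_k i; rewrite compl lit_true_lneg true_k.
Qed.

Lemma independent_clause_block_literal (I : {set V}) (i : 'I_m) :
  independent_set H I -> 1 < #|clause_block I i| -> exists k, (i, k, true) \in I.
Proof.
move=> /forallP indI /card_gt1P[u [v [+ + neq_uv]]].
rewrite !inE => /andP[uI /eqP ui] /andP[vI /eqP vi].
have same_occ : u.1.2 = v.1.2.
  have /implyP/(_ uI)/forallP/(_ v) := indI u; rewrite vI /=.
  by rewrite Hedge_same_clause ?ui ?vi // negbK => /eqP.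
case: u uI ui neq_uv same_occ => -[i1 k] [] uI /= ui; first by exists k; rewrite -ui.
case: v vI vi => -[i2 l] [] vI /= vi; first by exists l; rewrite -vi.
by rewrite ui vi => + eq_kl; rewrite eq_kl eqxx.
Qed.

Lemma alpha_Hedge_satisfiable : alpha H = 2 * m -> satisfiable f.
Proof.
move=> alpha_2m; have [I indI cardI] := alpha_witness H.
have block2 i : #|clause_block I i| = 2.
  apply: (sum_eq_bound (F := fun j => #|clause_block I j|)) => [j |].
    exact/dissociation_clause_block_le2/independent_dissociation_set.
  by rewrite -card_clause_blocks cardI alpha_2m card_ord mulnC.
have /fin_all_exists[k kI] i : exists k, (i, k, true) \in I.
  by apply: independent_clause_block_literal; rewrite ?block2.
have [|a true_a] := @consistent_literals_true n [pred l | [exists i, f i (k i) == l]].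
  move=> _ /existsP[i /eqP <-]; apply/existsP => -[j /eqP compl].
  have neq_ij : i != j.
    by apply/eqP => eq_ij; move/eqP: compl; rewrite eq_ij eq_sym (negbTE (lneg_neq _)).
  move/forallP/(_ (i, k i, true))/implyP/(_ (kI i))/forallP/(_ (j, k j, true)): indI.
  by rewrite kI Hedge_literal_copies // compl lnegK eqxx.
by exists a => i; exists (k i); apply: true_a; apply/existsP; exists i.
Qed.

End Reduction.

Theorem mainTheorem9 (n m : nat) (f : cnf3 n m) :
  diss (Hedge f) = 2 * m /\ (satisfiable f <-> diss (Hedge f) = alpha (Hedge f)).
Proof.
rewrite diss_Hedge; split=> //; split=> [sat_f | /esym]; last exact: alpha_Hedge_satisfiable.
by apply/eqP; rewrite eqn_leq satisfiable_alpha_Hedge // -(diss_Hedge f) alpha_le_diss.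
Qed.
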